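(* Assume the setting and algorithm described in the context. If $0<\alpha\le\frac{\sqrt n}{\sqrt{8m}\,L}$, then for all $k\ge0$, almost surely, $$\mathbb E\big[\|g^{k+1}-\nabla\mathbf f(x^{k+1})\|^2\,|\,\mathcal F^k\big]\le 8.5L^2\|x^k-Jx^k\|^2+4nL^2t^k+6n\alpha^2L^2\|\overline{\nabla\mathbf f}(x^k)\|^2+4\alpha^2L^2\,\mathbb E\big[\|y^{k+1}-Jy^{k+1}\|^2\,|\,\mathcal F^k\big].$$
   Context: Setting. Let $n,m,p\ge1$ be integers and $\mathcal V=\{1,\dots,n\}$. For each $i\in\mathcal V$ and $j\in\{1,\dots,m\}$, $f_{i,j}:\mathbb R^p\to\mathbb R$ is differentiable and $L$-smooth for some $L>0$, i.e. $\|\nabla f_{i,j}(x)-\nabla f_{i,j}(y)\|\le L\|x-y\|$ for all $x,y\in\mathbb R^p$. Let $f_i:=\frac1m\sum_{j=1}^m f_{i,j}$ and $F:=\frac1n\sum_{i=1}^n f_i$, and assume $F^*:=\inf_{x\in\mathbb R^p}F(x)>-\infty$. Let $\underline W=(\underline w_{ir})\in\mathbb R^{n\times n}$ be a nonnegative, primitive, doubly stochastic matrix ($\underline W\mathbf 1_n=\mathbf 1_n$, $\mathbf 1_n^\top\underline W=\mathbf 1_n^\top$), and let $\lambda\in[0,1)$ be its second largest singular value. Any expression with $\lambda$ in a denominator is read as $+\infty$ when $\lambda=0$. Algorithm GT-SAGA with step-size $\alpha>0$: fix a deterministic $\bar x^0\in\mathbb R^p$; for all $i\in\mathcal V$ set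 $x_i^0=\bar x^0$, $z_{i,j}^0=x_i^0$ for all $j$, $y_i^0=0$, $g_i^{-1}=0$. For $k=0,1,2,\dots$ and every $i\in\mathcal V$: draw $\tau_i^k$ uniformly from $\{1,\dots,m\}$; set $g_i^k=\nabla f_{i,\tau_i^k}(x_i^k)-\nabla f_{i,\tau_i^k}(z_{i,\tau_i^k}^k)+\frac1m\sum_{j=1}^m\nabla f_{i,j}(z_{i,j}^k)$; set $y_i^{k+1}=\sum_{r=1}^n\underline w_{ir}(y_r^k+g_r^k-g_r^{k-1})$; set $x_i^{k+1}=\sum_{r=1}^n\underline w_{ir}(x_r^k-\alpha y_r^{k+1})$; draw $s_i^k$ uniformly from $\{1,\dots,m\}$; set $z_{i,j}^{k+1}=x_i^k$ if $j=s_i^k$ and $z_{i,j}^{k+1}=z_{i,j}^k$ otherwise. The family $\{\tau_i^k,s_i^k: i\in\mathcal V,k\ge0\}$ is independent. Notation. $x^k,y^k,g^k\in\mathbb R^{np}$ stack the $x_i^k$, $y_i^k$, $g_i^k$; $\nabla\mathbf f(x^k)\in\mathbb R^{np}$ stacks $\nabla f_i(x_i^k)$, $i=1,\dots,n$; $W=\underline W\otimes I_p$, $J=(\frac1n\mathbf 1_n\mathbf 1_n^\top)\otimes I_p$; $\bar x^k=\frac1n\sum_i x_i^k$, $\bar g^k=\frac1n\sum_i g_i^k$, $\overline{\nabla\mathbf f}(x^k)=\frac1n\sum_i\nabla f_i(x_i^k)$. $\mathcal F^0$ is the trivial $\sigma$-algebra and $\mathcal F^k=\sigma(\{\tau_i^t,s_i^t:i\in\mathcal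 V,\ t\le k-1\})$ for $k\ge1$. $t^k:=\frac1n\sum_{i=1}^n\frac1m\sum_{j=1}^m\|\bar x^k-z_{i,j}^k\|^2$. $\|\nabla\mathbf f(x^0)\|^2:=\sum_{i=1}^n\|\nabla f_i(\bar x^0)\|^2$. Norms are Euclidean (spectral for matrices); vector and matrix inequalities are entrywise. *)

From HB Require Import structures.
From mathcomp Require Import all_boot all_order all_algebra.
From mathcomp Require Import all_classical all_reals all_analysis.
Set Implicit Arguments. Unset Strict Implicit. Unset Printing Implicit Defensive.
Import Order.TTheory GRing.Theory Num.Theory.
Import numFieldNormedType.Exports.
Local Open Scope ring_scope.

Section GTSAGA.
Variables (R : realType) (n m p : nat).

Definition dotv (u v : 'rV[R]_p) : R := \sum_(l < p) u 0 l * v 0 l.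
Definition sqnorm (v : 'rV[R]_p) : R := dotv v v.
Definition enorm (v : 'rV[R]_p) : R := Num.sqrt (sqnorm v).

(* one round of random draws: (tau^k_i)_i and (s^k_i)_i, each uniform on 'I_m *)
Definition draw := ({ffun 'I_n -> 'I_m} * {ffun 'I_n -> 'I_m})%type.
(* an outcome = the whole sequence of draws k = 0,1,2,... *)
Definition outcome := nat -> draw.

(* state at iteration k: x^k, y^k, g^{k-1}, z^k *)
Record state := State {
  st_x : 'I_n -> 'rV[R]_p;
  st_y : 'I_n -> 'rV[R]_p;
  st_gprev : 'I_n -> 'rV[R]_p;
  st_z : 'I_n -> 'I_m -> 'rV[R]_p }.

Variables (W : 'M[R]_n) (alpha : R) (gradf : 'I_n -> 'I_m -> 'rV[R]_p -> 'rV[R]_p)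
          (x0 : 'rV[R]_p).

Definition gradfi (i : 'I_n) (x : 'rV[R]_p) : 'rV[R]_p :=
  m%:R^-1 *: \sum_(j < m) gradf i j x.

Definition saga (st : state) (tau : {ffun 'I_n -> 'I_m}) (i : 'I_n) : 'rV[R]_p :=
  gradf i (tau i) (st_x st i) - gradf i (tau i) (st_z st i (tau i))
  + m%:R^-1 *: \sum_(j < m) gradf i j (st_z st i j).

Definition step (st : state) (d : draw) : state :=
  let g := saga st d.1 in
  let y' := fun i => \sum_(r < n) W i r *: (st_y st r + g r - st_gprev st r) in
  let x' := fun i => \sum_(r < n) W i r *: (st_x st r - alpha *: y' r) in
  let z' := fun i j => if j == d.2 i then st_x st i else st_z st i j in
  State x' y' g z'.

Definition init : state :=
  State (fun _ => x0) (fun _ => 0) (fun _ => 0) (fun _ _ => x0).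

Fixpoint traj (w : outcome) (k : nat) : state :=
  match k with 0 => init | k'.+1 => step (traj w k') (w k') end.

Definition xk w k := st_x (traj w k).
Definition yk w k := st_y (traj w k).
Definition zk w k := st_z (traj w k).
Definition gk w k := saga (traj w k) (w k).1.

Definition avg (v : 'I_n -> 'rV[R]_p) : 'rV[R]_p := n%:R^-1 *: \sum_(i < n) v i.
(* || v - J v ||^2 for a stacked vector v = (v_1,...,v_n) *)
Definition consensus_err (v : 'I_n -> 'rV[R]_p) : R :=
  \sum_(i < n) sqnorm (v i - avg v).
Definition stacked_sqdist (u v : 'I_n -> 'rV[R]_p) : R :=
  \sum_(i < n) sqnorm (u i - v i).

Definition tk w k : R :=
  n%:R^-1 * \sum_(i < n) (m%:R^-1 * \sum_(j < m) sqnorm (avg (xk w k) - zk w k i j)).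

(* ---- conditional expectation given F^k on the discrete product space ----
   The draws w 0, w 1, ... are i.i.d. uniform on the finite type [draw]
   (equivalently, all tau_i^k, s_i^k independent uniform on 'I_m).
   F^k is generated by w 0, ..., w (k-1).  For a random variable X that is
   F^(k+h)-measurable, i.e. depends only on w 0, ..., w (k+h-1),
   E[X | F^k](w) is the average of X over all values of the h draws
   w k, ..., w (k+h-1), the earlier draws being kept. *)
Definition splice (w : outcome) (k h : nat) (d : {ffun 'I_h -> draw}) : outcome :=
  fun t => if (k <= t)%N then
             match insub (t - k)%N : option 'I_h with
             | Some j => d j | None => w t end
           else w t.

Definition depends_upto (N : nat) (X : outcome -> R) : Prop :=
  forall w w' : outcome, (forall t, (t < N)%N -> w t = w' t) -> X w = X w'.

Definition condexp (k h : nat) (X : outcome -> R) (w : outcome) : R :=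
  (#|{: {ffun 'I_h -> draw}}|%:R)^-1 *
  \sum_(d : {ffun 'I_h -> draw}) X (splice w k d).

End GTSAGA.

Definition primitive_mx (R : realType) (n : nat) (A : 'M[R]_n) : Prop :=
  exists k : nat, forall i j, 0 < (A ^+ k) i j.

From HB Require Import structures.
From mathcomp Require Import all_boot all_order all_algebra.
From mathcomp Require Import all_classical all_reals all_analysis.
From mathcomp Require Import ring lra.
Import Order.TTheory GRing.Theory Num.Theory.
Import numFieldNormedType.Exports.
Local Open Scope ring_scope.

(* All randomness is uniform on finite sets, so expectations are normalized
   finite sums [Ex], and the conditional expectation given F^k is the average
   over the two fresh draws of iterations k and k+1 ([condexp_next]).  For a
   frozen state at iteration k the argument is:
   - the SAGA estimate of node i is unbiased and its variance is at most
     L^2 E_j |x_i - z_ij|^2 ([saga_at_var_le]); by independence of the nodes,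
     the network average of the estimates has second moment
     |mean grad f(x)|^2 + n^-2 (sum of variances) ([avg_saga_moment]);
   - one mixing step with a doubly stochastic W bounds the dispersion of
     x^{k+1} around the old mean ([mix_dispersion]), and gradient tracking
     identifies the mean of y^{k+1} with that of g^k ([tracking_step]);
   - refreshing one table entry per node bounds the new table distances
     ([refreshed_table_dist_le]).
   Combining these ([one_step_bound]) under 8 alpha^2 L^2 <= n, which follows
   from the step-size condition ([step_size_sq]), yields the claim. *)

Section UniformExpectation.
Context {R : realType}.

Definition Ex {T : finType} (F : T -> R) : R := (#|T|%:R)^-1 * \sum_(t : T) F t.

Lemma Ex_ext {T : finType} {F G : T -> R} : (forall t, F t = G t) -> Ex F = Ex G.
Proof. by move=> FG; congr Ex; apply: funext. Qed.

Lemma Ex_le {T : finType} {F G : T -> R} : (forall t, F t <= G t) -> Ex F <= Ex G.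
Proof. by move=> FG; rewrite ler_wpM2l ?invr_ge0 ?ler0n ?ler_sum. Qed.

Lemma Ex_ge0 {T : finType} (F : T -> R) : (forall t, 0 <= F t) -> 0 <= Ex F.
Proof. by move=> F0; rewrite mulr_ge0 ?invr_ge0 ?ler0n ?sumr_ge0. Qed.

Lemma Ex_add {T : finType} (F G : T -> R) : Ex (fun t => F t + G t) = Ex F + Ex G.
Proof. by rewrite /Ex big_split mulrDr. Qed.

Lemma Ex_scal {T : finType} (c : R) (F : T -> R) : Ex (fun t => c * F t) = c * Ex F.
Proof. by rewrite /Ex -mulr_sumr mulrCA. Qed.

Lemma Ex_sum {T I : finType} (F : I -> T -> R) :
  Ex (fun t => \sum_i F i t) = \sum_i Ex (F i).
Proof. by rewrite /Ex exchange_big mulr_sumr. Qed.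

Lemma Ex_const {T : finType} (c : R) : (0 < #|T|)%N -> Ex (fun _ : T => c) = c.
Proof.
move=> T0; rewrite /Ex sumr_const (_ : #|xpredT| = #|T|) // -[c *+ _]mulr_natl mulrA.
by rewrite mulVf ?mul1r // pnatr_eq0 -lt0n.
Qed.

Lemma Ex_bij {T1 T2 : finType} (h : T1 -> T2) (F : T2 -> R) :
  bijective h -> Ex (fun t => F (h t)) = Ex F.
Proof.
move=> bh; rewrite /Ex (bij_eq_card bh) (reindex h) //; exact: onW_bij.
Qed.

Lemma Ex_pair {T1 T2 : finType} (F : T1 * T2 -> R) :
  Ex F = Ex (fun a => Ex (fun b => F (a, b))).
Proof.
rewrite /Ex card_prod natrM invfM -mulrA -mulr_sumr pair_big /=.
by congr (_ * (_ * _)); apply: eq_bigr => -[].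
Qed.

Lemma Ex_var {T : finType} (F : T -> R) : (0 < #|T|)%N ->
  Ex (fun t => (F t - Ex F) ^+ 2) = Ex (fun t => F t ^+ 2) - Ex F ^+ 2.
Proof.
move=> T0; rewrite (Ex_ext (G := fun t => F t ^+ 2 + (- (2 * Ex F) * F t + Ex F ^+ 2)));
  last by move=> t; ring.
by rewrite !Ex_add Ex_scal Ex_const //; ring.
Qed.

Lemma Ex_var_le {T : finType} (F : T -> R) : (0 < #|T|)%N ->
  Ex (fun t => (F t - Ex F) ^+ 2) <= Ex (fun t => F t ^+ 2).
Proof. by move=> T0; rewrite Ex_var // lerBlDr lerDl sqr_ge0. Qed.

(* A uniform random function t : I -> J has independent uniform coordinates.
   This is expressed by resampling one coordinate. *)
Definition upd {I J : finType} (t : {ffun I -> J}) (i : I) (j : J) : {ffun I -> J} :=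
  [ffun r => if r == i then j else t r].

Lemma card_ffun_gt0 {I J : finType} : (0 < #|J|)%N -> (0 < #|{ffun I -> J}|)%N.
Proof. by move=> J0; rewrite card_ffun expn_gt0 J0. Qed.

Lemma Ex_resample {I J : finType} (i : I) (F : {ffun I -> J} -> R) : (0 < #|J|)%N ->
  Ex F = Ex (fun t => Ex (fun j => F (upd t i j))).
Proof.
move=> J0; pose h (q : {ffun I -> J} * J) := (upd q.1 i q.2, q.1 i).
have hK : cancel h h.
  move=> [t j]; rewrite /h /upd /= ffunE eqxx; congr pair.
  by apply/ffunP => r; rewrite !ffunE; case: eqP => [->|].
rewrite -(Ex_pair (fun q => F (upd q.1 i q.2))).
rewrite -(Ex_bij h (fun q => F (upd q.1 i q.2)) (Bijective hK hK)) /=.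
rewrite (Ex_ext (G := fun q => F q.1)); last by move=> q; rewrite -[in RHS](hK q).
by rewrite Ex_pair; apply: Ex_ext => t /=; rewrite (Ex_const (T := J)).
Qed.

Lemma Ex_coord {I J : finType} (i : I) (g : J -> R) : (0 < #|J|)%N ->
  Ex (fun t : {ffun I -> J} => g (t i)) = Ex g.
Proof.
move=> J0; rewrite (Ex_resample i) // (Ex_ext (G := fun _ => Ex g)).
  by rewrite Ex_const // card_ffun_gt0.
by move=> t; apply: Ex_ext => j; rewrite /upd ffunE eqxx.
Qed.

Lemma Ex_coord2 {I J : finType} (i r : I) (g1 g2 : J -> R) : (0 < #|J|)%N -> i != r ->
  Ex (fun t : {ffun I -> J} => g1 (t i) * g2 (t r)) = Ex g1 * Ex g2.
Proof.
move=> J0 ir; rewrite (Ex_resample i) //.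
rewrite (Ex_ext (G := fun t : {ffun I -> J} => Ex g1 * g2 (t r))).
  by rewrite Ex_scal Ex_coord.
move=> t; rewrite mulrC -Ex_scal; apply: Ex_ext => j.
by rewrite /upd !ffunE eqxx eq_sym (negbTE ir) mulrC.
Qed.

Lemma Ex_indep {I J : finType} (h : I -> J -> R) : (0 < #|J|)%N ->
  Ex (fun t : {ffun I -> J} => (\sum_i h i (t i)) ^+ 2)
  = (\sum_i Ex (h i)) ^+ 2 + \sum_i Ex (fun j => (h i j - Ex (h i)) ^+ 2).
Proof.
move=> J0.
rewrite (Ex_ext (G := fun t : {ffun I -> J} => \sum_i \sum_r h i (t i) * h r (t r)));
  last by move=> t; rewrite expr2 mulr_suml; apply: eq_bigr => i _; rewrite mulr_sumr.
rewrite Ex_sum expr2 mulr_suml -big_split /=; apply: eq_bigr => i _.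
rewrite Ex_sum mulr_sumr (bigD1 i) //= [in RHS](bigD1 i) //=.
have cross : forall r, r != i ->
    Ex (fun t : {ffun I -> J} => h i (t i) * h r (t r)) = Ex (h i) * Ex (h r).
  by move=> r ri; rewrite Ex_coord2 // eq_sym.
rewrite (eq_bigr _ cross) (Ex_coord i (fun j => h i j * h i j)) // Ex_var //.
rewrite (Ex_ext (F := fun j => h i j ^+ 2) (G := fun j => h i j * h i j));
  last by move=> j; rewrite expr2.
ring.
Qed.

Lemma jensen_sq {I : finType} (c a : I -> R) : (forall r, 0 <= c r) -> \sum_r c r = 1 ->
  (\sum_r c r * a r) ^+ 2 <= \sum_r c r * a r ^+ 2.
Proof.
move=> c0 c1; set mu := \sum_r c r * a r.
have expand : \sum_r c r * (a r - mu) ^+ 2 = \sum_r c r * a r ^+ 2 - mu ^+ 2.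
  rewrite (eq_bigr (fun r => c r * a r ^+ 2 + (- (2 * mu)) * (c r * a r) + mu ^+ 2 * c r));
    last by move=> r _; ring.
  by rewrite !big_split /= -!mulr_sumr c1 -/mu; ring.
rewrite -subr_ge0 -expand; apply: sumr_ge0 => r _; exact: mulr_ge0 (c0 r) (sqr_ge0 _).
Qed.

End UniformExpectation.

Section EuclideanNorm.
Context {R : realType} {p : nat}.
Implicit Types u v c : 'rV[R]_p.

Lemma sqnorm_coord v : sqnorm v = \sum_l v 0 l ^+ 2.
Proof. by apply: eq_bigr => l _; rewrite expr2. Qed.

Lemma sqnorm_ge0 v : 0 <= sqnorm v.
Proof. by rewrite sqnorm_coord sumr_ge0 // => l _; rewrite sqr_ge0. Qed.

Lemma sqnorm_sym u v : sqnorm (u - v) = sqnorm (v - u).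
Proof. by rewrite !sqnorm_coord; apply: eq_bigr => l _; rewrite -opprB mxE sqrrN !mxE. Qed.

Lemma sqnorm_scale (a : R) v : sqnorm (a *: v) = a ^+ 2 * sqnorm v.
Proof. by rewrite !sqnorm_coord mulr_sumr; apply: eq_bigr => l _; rewrite mxE exprMn. Qed.

Lemma sqnorm_split u v c : sqnorm (u - v) <= 2 * sqnorm (u - c) + 2 * sqnorm (c - v).
Proof.
rewrite !sqnorm_coord !mulr_sumr -big_split /=; apply: ler_sum => l _; rewrite !mxE.
have := sqr_ge0 (u 0 l + v 0 l - 2 * c 0 l); nra.
Qed.

Lemma sqnorm_le_of_enorm u v (a : R) :
  0 <= a -> enorm u <= a * enorm v -> sqnorm u <= a ^+ 2 * sqnorm v.
Proof.
move=> a0 uv; rewrite -(sqr_sqrtr (sqnorm_ge0 u)) -(sqr_sqrtr (sqnorm_ge0 v)) -exprMn.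
by rewrite ler_pXn2r // nnegrE ?mulr_ge0 ?sqrtr_ge0.
Qed.

Definition Exv {T : finType} (v : T -> 'rV[R]_p) : 'rV[R]_p :=
  (#|T|%:R)^-1 *: \sum_t v t.

Lemma Exv_coord {T : finType} (v : T -> 'rV[R]_p) l : Exv v 0 l = Ex (fun t => v t 0 l).
Proof. by rewrite mxE summxE. Qed.

Lemma Exv_sub {T : finType} (u v : T -> 'rV[R]_p) :
  Exv (fun t => u t - v t) = Exv u - Exv v.
Proof. by rewrite /Exv sumrB scalerBr. Qed.

Lemma Exv_const {T : finType} (v : 'rV[R]_p) : (0 < #|T|)%N -> Exv (fun _ : T => v) = v.
Proof.
move=> T0; rewrite /Exv sumr_const (_ : #|xpredT| = #|T|) // -[v *+ _]scaler_nat scalerA.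
by rewrite mulVf ?scale1r // pnatr_eq0 -lt0n.
Qed.

Lemma Ex_sqnorm_var_le {T : finType} (v : T -> 'rV[R]_p) : (0 < #|T|)%N ->
  Ex (fun t => sqnorm (v t - Exv v)) <= Ex (fun t => sqnorm (v t)).
Proof.
move=> T0; rewrite (Ex_ext (G := fun t => \sum_l (v t 0 l - Ex (fun s => v s 0 l)) ^+ 2)).
  rewrite (Ex_ext (F := fun t => sqnorm (v t)) (G := fun t => \sum_l v t 0 l ^+ 2)).
    by rewrite !Ex_sum; apply: ler_sum => l _; exact: Ex_var_le.
  by move=> t; rewrite sqnorm_coord.
by move=> t; rewrite sqnorm_coord; apply: eq_bigr => l _; rewrite !mxE summxE.
Qed.

Lemma Ex_sqnorm_indep {I J : finType} (h : I -> J -> 'rV[R]_p) : (0 < #|J|)%N ->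
  Ex (fun t : {ffun I -> J} => sqnorm (\sum_i h i (t i)))
  = sqnorm (\sum_i Exv (h i)) + \sum_i Ex (fun j => sqnorm (h i j - Exv (h i))).
Proof.
move=> J0; rewrite (Ex_ext (G := fun t : {ffun I -> J} =>
                               \sum_l (\sum_i h i (t i) 0 l) ^+ 2)); last first.
  by move=> t; rewrite sqnorm_coord; apply: eq_bigr => l _; rewrite summxE.
rewrite Ex_sum sqnorm_coord.
rewrite (eq_bigr (fun i => \sum_l Ex (fun j => (h i j 0 l - Ex (fun j => h i j 0 l)) ^+ 2)));
  last first.
  move=> i _; rewrite -Ex_sum; apply: Ex_ext => j; rewrite sqnorm_coord.
  by apply: eq_bigr => l _; rewrite !mxE summxE.
rewrite exchange_big -big_split /=; apply: eq_bigr => l _.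
rewrite (Ex_indep (fun i j => h i j 0 l)) // summxE.
by congr (_ ^+ 2 + _); apply: eq_bigr => i _; rewrite Exv_coord.
Qed.

End EuclideanNorm.

Section SagaEstimator.
Context {R : realType} {n m p : nat}.
Variable L : R.
Variable gradf : 'I_n -> 'I_m -> 'rV[R]_p -> 'rV[R]_p.
Hypothesis m_gt0 : (0 < m)%N.
Hypothesis L_ge0 : 0 <= L.
Hypothesis smooth : forall i j (x y : 'rV[R]_p),
  enorm (gradf i j x - gradf i j y) <= L * enorm (x - y).

Definition saga_at (st : state R n m p) (i : 'I_n) (j : 'I_m) : 'rV[R]_p :=
  gradf i j (st_x st i) - gradf i j (st_z st i j)
  + Exv (fun j' => gradf i j' (st_z st i j')).

Lemma sagaE st tau i : saga gradf st tau i = saga_at st i (tau i).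
Proof. by rewrite /saga_at /Exv card_ord. Qed.

Lemma gradfiE i x : gradfi gradf i x = Exv (fun j => gradf i j x).
Proof. by rewrite /Exv card_ord. Qed.

Lemma saga_at_error st i j :
  let D j := gradf i j (st_x st i) - gradf i j (st_z st i j) in
  saga_at st i j - gradfi gradf i (st_x st i) = D j - Exv D.
Proof.
move=> D; rewrite /D gradfiE Exv_sub /saga_at.
by rewrite opprB addrA -addrA [Exv _ + _]addrC.
Qed.

Lemma saga_at_unbiased st i : Exv (saga_at st i) = gradfi gradf i (st_x st i).
Proof.
pose D j := gradf i j (st_x st i) - gradf i j (st_z st i j).
have m0 : (0 < #|'I_m|)%N by rewrite card_ord.
apply/eqP; rewrite -subr_eq0 -[X in _ - X](Exv_const (T := 'I_m)) // -Exv_sub.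
rewrite (_ : (fun j => _) = fun j => D j - Exv D); last first.
  by apply: funext => j; exact: saga_at_error.
by rewrite Exv_sub Exv_const // subrr.
Qed.

Lemma saga_at_var_le st i :
  Ex (fun j => sqnorm (saga_at st i j - gradfi gradf i (st_x st i)))
  <= L ^+ 2 * Ex (fun j => sqnorm (st_x st i - st_z st i j)).
Proof.
rewrite (Ex_ext (G := fun j => sqnorm (gradf i j (st_x st i) - gradf i j (st_z st i j)
           - Exv (fun j' => gradf i j' (st_x st i) - gradf i j' (st_z st i j')))));
  last by move=> j; rewrite saga_at_error.
apply: le_trans (Ex_sqnorm_var_le _ _) _; first by rewrite card_ord.
by rewrite -Ex_scal; apply: Ex_le => j; exact: sqnorm_le_of_enorm _ _ _ L_ge0 (smooth _ _ _ _).
Qed.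

Lemma avg_saga_moment st :
  Ex (fun tau : {ffun 'I_n -> 'I_m} => sqnorm (avg (saga gradf st tau)))
  = sqnorm (avg (fun i => gradfi gradf i (st_x st i)))
    + n%:R^-1 ^+ 2 * \sum_i Ex (fun j => sqnorm (saga_at st i j - gradfi gradf i (st_x st i))).
Proof.
pose S (tau : {ffun 'I_n -> 'I_m}) := sqnorm (\sum_i saga_at st i (tau i)).
rewrite (Ex_ext (G := fun tau => n%:R^-1 ^+ 2 * S tau)); last first.
  move=> tau; rewrite /avg sqnorm_scale /S; congr (_ * sqnorm _).
  by apply: eq_bigr => i _; exact: sagaE.
rewrite Ex_scal /S Ex_sqnorm_indep ?card_ord // /avg sqnorm_scale mulrDr.
by congr (_ * sqnorm _ + _ * _); apply: eq_bigr => i _; rewrite saga_at_unbiased.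
Qed.

End SagaEstimator.

Section Mixing.
Context {R : realType} {n : nat}.
Variables (W : 'M[R]_n) (alpha : R).
Hypothesis n_gt0 : (0 < n)%N.
Hypothesis W_ge0 : forall i j, 0 <= W i j.
Hypothesis W_row : forall i, \sum_(r < n) W i r = 1.
Hypothesis W_col : forall r, \sum_(i < n) W i r = 1.

Lemma mix_sum (A : 'I_n -> R) : \sum_i \sum_r W i r * A r = \sum_r A r.
Proof. by rewrite exchange_big; apply: eq_bigr => r _; rewrite -mulr_suml W_col mul1r. Qed.

(* Each row of W is a convex combination (Jensen), and columns sum to one. *)
Lemma mix_sq_le (A : 'I_n -> R) : \sum_i (\sum_r W i r * A r) ^+ 2 <= \sum_r A r ^+ 2.
Proof.
apply: le_trans (_ : \sum_i \sum_r W i r * A r ^+ 2 <= _); last by rewrite mix_sum.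
by apply: ler_sum => i _; exact: jensen_sq.
Qed.

Lemma dev_sum0 (x : 'I_n -> R) : \sum_r (x r - n%:R^-1 * \sum_r' x r') = 0.
Proof.
rewrite sumrB sumr_const card_ord -[_ *+ n]mulr_natl mulrA mulfV ?mul1r ?subrr //.
by rewrite pnatr_eq0 -lt0n.
Qed.

Lemma mix_dispersion_scalar (x y : 'I_n -> R) :
  \sum_i (\sum_r W i r * (x r - alpha * y r) - n%:R^-1 * \sum_r x r) ^+ 2
  <= 2 * \sum_r (x r - n%:R^-1 * \sum_r' x r') ^+ 2
     + 2 * alpha ^+ 2 * \sum_r (y r - n%:R^-1 * \sum_r' y r') ^+ 2
     + 2 * alpha ^+ 2 * n%:R * (n%:R^-1 * \sum_r y r) ^+ 2.
Proof.
set xb := n%:R^-1 * \sum_r x r; set yb := n%:R^-1 * \sum_r y r.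
pose U i := \sum_r W i r * (x r - xb).
pose V i := \sum_r W i r * (y r - yb).
have decomp i : \sum_r W i r * (x r - alpha * y r) - xb = U i - alpha * V i - alpha * yb.
  rewrite (eq_bigr (fun r => W i r * (x r - xb) + (- alpha) * (W i r * (y r - yb))
                             + W i r * (xb - alpha * yb))); last by move=> r _; ring.
  by rewrite !big_split /= -mulr_sumr -mulr_suml W_row /U /V; ring.
have split_sq : \sum_i (\sum_r W i r * (x r - alpha * y r) - xb) ^+ 2
          <= \sum_i (2 * alpha ^+ 2 * V i ^+ 2 + 2 * (U i - alpha * yb) ^+ 2).
  apply: ler_sum => i _; rewrite decomp.
  have := sqr_ge0 (U i - alpha * yb + alpha * V i); nra.
have U0 : \sum_i U i = 0 by rewrite /U mix_sum dev_sum0.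
have shift : \sum_i (U i - alpha * yb) ^+ 2 = \sum_i U i ^+ 2 + (alpha * yb) ^+ 2 * n%:R.
  rewrite (eq_bigr (fun i => U i ^+ 2 + (- (2 * alpha * yb)) * U i + (alpha * yb) ^+ 2));
    last by move=> i _; ring.
  by rewrite !big_split /= -mulr_sumr U0 mulr0 addr0 sumr_const card_ord mulr_natr.
have hU : \sum_i U i ^+ 2 <= \sum_r (x r - xb) ^+ 2 by exact: mix_sq_le.
have hV : \sum_i V i ^+ 2 <= \sum_r (y r - yb) ^+ 2 by exact: mix_sq_le.
rewrite big_split /= -!mulr_sumr shift in split_sq.
have := sqr_ge0 alpha; nra.
Qed.

Context {p : nat}.

Lemma avg_coord (v : 'I_n -> 'rV[R]_p) l : avg v 0 l = n%:R^-1 * \sum_r v r 0 l.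
Proof. by rewrite mxE summxE. Qed.

Lemma consensus_err_coord (v : 'I_n -> 'rV[R]_p) :
  consensus_err v = \sum_l \sum_i (v i 0 l - n%:R^-1 * \sum_r v r 0 l) ^+ 2.
Proof.
rewrite /consensus_err (eq_bigr _ (fun i _ => sqnorm_coord _)) exchange_big /=.
by apply: eq_bigr => l _; apply: eq_bigr => i _; rewrite !mxE summxE.
Qed.

Lemma consensus_err_ge0 (v : 'I_n -> 'rV[R]_p) : 0 <= consensus_err v.
Proof. by apply: sumr_ge0 => i _; exact: sqnorm_ge0. Qed.

Lemma mix_dispersion (x y : 'I_n -> 'rV[R]_p) :
  \sum_i sqnorm (\sum_r W i r *: (x r - alpha *: y r) - avg x)
  <= 2 * consensus_err x + 2 * alpha ^+ 2 * consensus_err y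
     + 2 * alpha ^+ 2 * n%:R * sqnorm (avg y).
Proof.
rewrite !consensus_err_coord [sqnorm (avg y)]sqnorm_coord !mulr_sumr -!big_split /=.
rewrite (eq_bigr (fun i => \sum_l (\sum_r W i r * (x r 0 l - alpha * y r 0 l)
                                   - n%:R^-1 * \sum_r x r 0 l) ^+ 2)); last first.
  move=> i _; rewrite sqnorm_coord; apply: eq_bigr => l _.
  rewrite mxE summxE [X in _ + X]mxE avg_coord; congr ((_ - _) ^+ 2).
  by apply: eq_bigr => r _; rewrite !mxE.
rewrite exchange_big /=; apply: ler_sum => l _.
rewrite avg_coord; exact: mix_dispersion_scalar.
Qed.

Lemma avg_mix (v : 'I_n -> 'rV[R]_p) : avg (fun i => \sum_r W i r *: v r) = avg v.
Proof.
rewrite /avg exchange_big /=; congr (_ *: _); apply: eq_bigr => r _.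
by rewrite -scaler_suml W_col scale1r.
Qed.

Lemma tracking_step {m : nat} (gradf : 'I_n -> 'I_m -> 'rV[R]_p -> 'rV[R]_p)
  (st : state R n m p) (d : draw n m) :
  avg (st_y st) = avg (st_gprev st) ->
  avg (st_y (step W alpha gradf st d)) = avg (saga gradf st d.1).
Proof.
move=> yg /=; rewrite avg_mix /avg sumrB big_split /= scalerBr scalerDr.
by rewrite -!/(avg _) yg addrC addKr.
Qed.

Lemma tracking {m : nat} (gradf : 'I_n -> 'I_m -> 'rV[R]_p -> 'rV[R]_p) x0 w k :
  avg (st_y (traj W alpha gradf x0 w k)) = avg (st_gprev (traj W alpha gradf x0 w k)).
Proof. by elim: k => [//|k IH] /=; exact: tracking_step. Qed.

End Mixing.

Section GradientTable.
Context {R : realType} {n m p : nat}.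
Hypothesis m_gt0 : (0 < m)%N.

Lemma Ex_sqnorm_split {T : finType} (a c : 'rV[R]_p) (z : T -> 'rV[R]_p) : (0 < #|T|)%N ->
  Ex (fun j => sqnorm (a - z j)) <= 2 * sqnorm (a - c) + 2 * Ex (fun j => sqnorm (c - z j)).
Proof.
move=> T0; rewrite -Ex_scal -[2 * sqnorm _](Ex_const (T := T)) // -Ex_add.
by apply: Ex_le => j; exact: sqnorm_split.
Qed.

Lemma Ex_refresh_le (a x : 'rV[R]_p) (z : 'I_m -> 'rV[R]_p) (s : 'I_m) :
  Ex (fun j => sqnorm (a - (if j == s then x else z j)))
  <= sqnorm (a - x) + Ex (fun j => sqnorm (a - z j)).
Proof.
apply: le_trans (Ex_le (G := fun j => sqnorm (a - z j)
                          + (if j == s then sqnorm (a - x) else 0)) _) _.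
  by move=> j; case: eqP => _; rewrite ?addr0 // lerDr sqnorm_ge0.
rewrite Ex_add addrC lerD2r /Ex (bigD1 s) //= eqxx big1 ?addr0 => [|j /negbTE -> //].
by rewrite card_ord ler_piMl ?sqnorm_ge0 // invf_le1 ?ler1n ?ltr0n.
Qed.

Lemma table_dist_le (x : 'I_n -> 'rV[R]_p) (z : 'I_n -> 'I_m -> 'rV[R]_p) :
  \sum_i Ex (fun j => sqnorm (x i - z i j))
  <= 2 * consensus_err x + 2 * \sum_i Ex (fun j => sqnorm (avg x - z i j)).
Proof.
rewrite !mulr_sumr -big_split /=; apply: ler_sum => i _.
by apply: Ex_sqnorm_split; rewrite card_ord.
Qed.

Lemma refreshed_table_dist_le (x' x : 'I_n -> 'rV[R]_p) (z : 'I_n -> 'I_m -> 'rV[R]_p)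
    (s : {ffun 'I_n -> 'I_m}) :
  \sum_i Ex (fun j => sqnorm (x' i - (if j == s i then x i else z i j)))
  <= 2 * \sum_i sqnorm (x' i - avg x) + 2 * consensus_err x
     + 2 * \sum_i Ex (fun j => sqnorm (avg x - z i j)).
Proof.
rewrite /consensus_err !mulr_sumr -!big_split /=; apply: ler_sum => i _.
apply: le_trans (Ex_sqnorm_split _ (avg x) _ _) _; first by rewrite card_ord.
rewrite -addrA lerD2l -mulrDr ler_wpM2l // sqnorm_sym; exact: Ex_refresh_le.
Qed.

End GradientTable.

Section OneStep.
Context {R : realType} {n m p : nat}.
Variables (W : 'M[R]_n) (alpha L : R).
Variable gradf : 'I_n -> 'I_m -> 'rV[R]_p -> 'rV[R]_p.
Hypothesis n_gt0 : (0 < n)%N.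
Hypothesis m_gt0 : (0 < m)%N.
Hypothesis L_ge0 : 0 <= L.
Hypothesis smooth : forall i j (x y : 'rV[R]_p),
  enorm (gradf i j x - gradf i j y) <= L * enorm (x - y).
Hypothesis W_ge0 : forall i j, 0 <= W i j.
Hypothesis W_row : forall i, \sum_(r < n) W i r = 1.
Hypothesis W_col : forall r, \sum_(i < n) W i r = 1.
Hypothesis step_small : 8 * alpha ^+ 2 * L ^+ 2 <= n%:R.

Definition grad_error (st : state R n m p) (tau : {ffun 'I_n -> 'I_m}) : R :=
  stacked_sqdist (saga gradf st tau) (fun i => gradfi gradf i (st_x st i)).

Definition table_spread (st : state R n m p) : R :=
  \sum_i Ex (fun j => sqnorm (avg (st_x st) - st_z st i j)).

Lemma table_spread_ge0 st : 0 <= table_spread st.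
Proof. by apply: sumr_ge0 => i _; apply: Ex_ge0 => j; exact: sqnorm_ge0. Qed.

Lemma draw_card_gt0 : (0 < #|{: draw n m}|)%N.
Proof. by rewrite card_prod muln_gt0 !card_ffun_gt0 ?card_ord. Qed.

Lemma Ex_draw_fst (F : {ffun 'I_n -> 'I_m} -> R) :
  Ex (fun d : draw n m => F d.1) = Ex F.
Proof.
rewrite Ex_pair; apply: Ex_ext => tau /=.
by rewrite Ex_const ?card_ffun_gt0 ?card_ord.
Qed.

Lemma Ex_grad_error_le st :
  Ex (grad_error st) <= L ^+ 2 * \sum_i Ex (fun j => sqnorm (st_x st i - st_z st i j)).
Proof.
rewrite /grad_error /stacked_sqdist Ex_sum mulr_sumr; apply: ler_sum => i _.
rewrite (Ex_ext (G := fun tau : {ffun 'I_n -> 'I_m} =>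
           sqnorm (saga_at gradf st i (tau i) - gradfi gradf i (st_x st i))));
  last by move=> tau; rewrite sagaE.
rewrite (Ex_coord i (fun j => sqnorm (saga_at gradf st i j - gradfi gradf i (st_x st i))))
  ?card_ord //.
exact: saga_at_var_le.
Qed.

Lemma Ex_avg_saga_le st :
  Ex (fun tau : {ffun 'I_n -> 'I_m} => sqnorm (avg (saga gradf st tau)))
  <= sqnorm (avg (fun i => gradfi gradf i (st_x st i)))
     + n%:R^-1 ^+ 2 * (L ^+ 2 * (2 * consensus_err (st_x st) + 2 * table_spread st)).
Proof.
rewrite avg_saga_moment // lerD2l ler_wpM2l ?sqr_ge0 //.
apply: le_trans (_ : _ <= L ^+ 2 * \sum_i Ex (fun j => sqnorm (st_x st i - st_z st i j))) _.
  by rewrite mulr_sumr; apply: ler_sum => i _; exact: saga_at_var_le.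
by rewrite ler_wpM2l ?sqr_ge0 // table_dist_le.
Qed.

Lemma next_grad_error_le (st : state R n m p) (d : draw n m) :
  avg (st_y st) = avg (st_gprev st) ->
  Ex (fun d' : draw n m => grad_error (step W alpha gradf st d) d'.1)
  <= L ^+ 2 * (6 * consensus_err (st_x st) + 2 * table_spread st)
     + 4 * alpha ^+ 2 * L ^+ 2 * consensus_err (st_y (step W alpha gradf st d))
     + 4 * alpha ^+ 2 * n%:R * L ^+ 2 * sqnorm (avg (saga gradf st d.1)).
Proof.
move=> yg; set st' := step W alpha gradf st d.
rewrite Ex_draw_fst; apply: le_trans (Ex_grad_error_le st') _.
have table := refreshed_table_dist_le m_gt0 (st_x st') (st_x st) (st_z st) d.2.
have disp := mix_dispersion W alpha n_gt0 W_ge0 W_row W_col (st_x st) (st_y st').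
rewrite (tracking_step W alpha W_col gradf st d yg) in disp.
have := ler_wpM2l (sqr_ge0 L) table; have := ler_wpM2l (sqr_ge0 L) disp.
rewrite /table_spread; lra.
Qed.

Lemma one_step_bound (st : state R n m p) :
  avg (st_y st) = avg (st_gprev st) ->
  Ex (fun d : draw n m => Ex (fun d' : draw n m =>
        grad_error (step W alpha gradf st d) d'.1))
  <= 7 * L ^+ 2 * consensus_err (st_x st) + 3 * L ^+ 2 * table_spread st
     + 4 * n%:R * alpha ^+ 2 * L ^+ 2 * sqnorm (avg (fun i => gradfi gradf i (st_x st i)))
     + 4 * alpha ^+ 2 * L ^+ 2
         * Ex (fun d : draw n m => consensus_err (st_y (step W alpha gradf st d))).
Proof.
move=> yg; apply: le_trans (Ex_le (fun d => next_grad_error_le st d yg)) _.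
rewrite !Ex_add Ex_const ?draw_card_gt0 // !Ex_scal.
rewrite (Ex_draw_fst (fun tau => sqnorm (avg (saga gradf st tau)))).
have avg_saga := Ex_avg_saga_le st.
set a := consensus_err _ in avg_saga *; set T := table_spread st in avg_saga *.
have a0 : 0 <= a by exact: consensus_err_ge0.
have T0 : 0 <= T by exact: table_spread_ge0.
(* The variance of the averaged estimator is damped by the step-size condition. *)
have damped : 4 * alpha ^+ 2 * n%:R * L ^+ 2 * (n%:R^-1 ^+ 2 * (L ^+ 2 * (2 * a + 2 * T)))
              <= L ^+ 2 * (a + T).
  have n0 : (n%:R : R) != 0 by rewrite pnatr_eq0 -lt0n.
  rewrite (_ : _ * _ = (8 * alpha ^+ 2 * L ^+ 2 / n%:R) * (L ^+ 2 * (a + T)));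
    last by field.
  by rewrite ler_piMl ?mulr_ge0 ?sqr_ge0 ?addr_ge0 // ler_pdivrMr ?ltr0n // mul1r.
have c0 : 0 <= 4 * alpha ^+ 2 * n%:R * L ^+ 2.
  by rewrite mulr_ge0 ?sqr_ge0 // mulr_ge0 ?ler0n // mulr_ge0 ?sqr_ge0.
have := ler_wpM2l c0 avg_saga; lra.
Qed.

End OneStep.

Section ConditionalExpectation.
Context {R : realType} {n m p : nat}.
Variables (W : 'M[R]_n) (alpha : R) (gradf : 'I_n -> 'I_m -> 'rV[R]_p -> 'rV[R]_p).
Variable x0 : 'rV[R]_p.

Lemma traj_depends_upto (w w' : outcome n m) k :
  (forall t, (t < k)%N -> w t = w' t) ->
  traj W alpha gradf x0 w k = traj W alpha gradf x0 w' k.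
Proof.
elim: k => [//|k IH] ww' /=.
by rewrite IH ?ww' // => t tk; apply: ww'; exact: ltnW.
Qed.

Lemma splice_before (w : outcome n m) k {h : nat} (d : {ffun 'I_h -> draw n m}) t :
  (t < k)%N -> splice w k d t = w t.
Proof. by move=> tk; rewrite /splice leqNgt tk. Qed.

Lemma splice_at (w : outcome n m) k {h : nat} (d : {ffun 'I_h -> draw n m}) (i : 'I_h) :
  splice w k d (k + i)%N = d i.
Proof.
rewrite /splice leq_addr addKn; case: insubP => [j _ ji|]; last by rewrite ltn_ord.
by congr (d _); apply: val_inj.
Qed.

Lemma condexpE k h (X : outcome n m -> R) (w : outcome n m) :
  condexp k h X w = Ex (fun d : {ffun 'I_h -> draw n m} => X (splice w k d)).
Proof. by []. Qed.

Lemma condexp_next (F : state R n m p -> draw n m -> R) k (w : outcome n m) :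
  condexp k 2 (fun w' => F (traj W alpha gradf x0 w' k.+1) (w' k.+1)) w
  = Ex (fun d => Ex (fun d' => F (step W alpha gradf (traj W alpha gradf x0 w k) d) d')).
Proof.
pose pack (q : draw n m * draw n m) : {ffun 'I_2 -> draw n m} :=
  [ffun i : 'I_2 => if i == ord0 then q.1 else q.2].
have pack_bij : bijective pack.
  exists (fun f : {ffun 'I_2 -> draw n m} => (f ord0, f ord_max)).
    by move=> [a b]; rewrite /pack !ffunE.
  move=> f; apply/ffunP => i; rewrite /pack ffunE /=.
  by case: i => [[|[|i]] hi] //; congr (f _); apply: val_inj.
rewrite condexpE -(Ex_bij pack _ pack_bij) Ex_pair.
apply: Ex_ext => d; apply: Ex_ext => d' /=.
have at0 := splice_at w k (pack (d, d')) ord0; have at1 := splice_at w k (pack (d, d')) ord_max.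
rewrite addn0 /pack ffunE in at0; rewrite addn1 /pack ffunE in at1.
rewrite at0 at1 (traj_depends_upto _ w) // => t tk; exact: splice_before.
Qed.

End ConditionalExpectation.

Lemma step_size_sq {R : realType} {n m : nat} {alpha L : R} :
  (0 < m)%N -> 0 < L -> 0 <= alpha ->
  alpha <= Num.sqrt n%:R / (Num.sqrt (8 * m%:R) * L) -> 8 * alpha ^+ 2 * L ^+ 2 <= n%:R.
Proof.
move=> m0 L0 a0; have m8 : (0 : R) <= 8 * m%:R by rewrite mulr_ge0 ?ler0n.
rewrite ler_pdivlMr ?mulr_gt0 ?sqrtr_gt0 ?mulr_gt0 ?ltr0n // => le_sqrt.
have : (alpha * (Num.sqrt (8 * m%:R) * L)) ^+ 2 <= Num.sqrt n%:R ^+ 2.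
  by rewrite ler_pXn2r // nnegrE ?sqrtr_ge0 // !mulr_ge0 ?sqrtr_ge0 // ltW.
rewrite !exprMn !sqr_sqrtr ?ler0n // => sq.
have m1 : (1 : R) <= m%:R by rewrite ler1n.
have := sqr_ge0 alpha; have := sqr_ge0 L; nra.
Qed.

Lemma table_spread_traj {R : realType} {n m p : nat} (W : 'M[R]_n) (alpha : R)
    (gradf : 'I_n -> 'I_m -> 'rV[R]_p -> 'rV[R]_p) x0 w k : (0 < n)%N ->
  table_spread (traj W alpha gradf x0 w k) = n%:R * tk W alpha gradf x0 w k.
Proof.
move=> n0; rewrite /tk mulrA mulfV ?mul1r ?pnatr_eq0 -?lt0n //.
by apply: eq_bigr => i _; rewrite /Ex card_ord.
Qed.

Theorem lemma6 (R : realType) (n m p : nat)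
  (f : 'I_n -> 'I_m -> 'rV[R]_p -> R)
  (gradf : 'I_n -> 'I_m -> 'rV[R]_p -> 'rV[R]_p)
  (L : R) (W : 'M[R]_n) (x0 : 'rV[R]_p) (alpha : R) :
  (0 < n)%N -> (0 < m)%N -> (0 < p)%N ->
  (* f_{i,j} differentiable with gradient gradf i j *)
  (forall i j (x : 'rV[R]_p), differentiable (f i j) x /\
     forall h : 'rV[R]_p, 'd (f i j) x h = dotv (gradf i j x) h) ->
  (* L-smoothness *)
  0 < L ->
  (forall i j (x y : 'rV[R]_p),
     enorm (gradf i j x - gradf i j y) <= L * enorm (x - y)) ->
  (* F bounded below *)
  (exists c : R, forall x : 'rV[R]_p,
     c <= n%:R^-1 * \sum_(i < n) (m%:R^-1 * \sum_(j < m) f i j x)) ->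
  (* W nonnegative, primitive, doubly stochastic *)
  (forall i j, 0 <= W i j) -> primitive_mx W ->
  (forall i, \sum_(r < n) W i r = 1) -> (forall r, \sum_(i < n) W i r = 1) ->
  (* step size *)
  0 < alpha -> alpha <= Num.sqrt n%:R / (Num.sqrt (8 * m%:R) * L) ->
  forall (k : nat) (w : outcome n m),
    condexp k 2
      (fun w' => stacked_sqdist (gk W alpha gradf x0 w' k.+1)
                   (fun i => gradfi gradf i (xk W alpha gradf x0 w' k.+1 i))) w
    <= 85 / 10 * L ^+ 2 * consensus_err (xk W alpha gradf x0 w k)
       + 4 * n%:R * L ^+ 2 * tk W alpha gradf x0 w k
       + 6 * n%:R * alpha ^+ 2 * L ^+ 2
           * sqnorm (avg (fun i => gradfi gradf i (xk W alpha gradf x0 w k i)))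
       + 4 * alpha ^+ 2 * L ^+ 2
           * condexp k 2 (fun w' => consensus_err (yk W alpha gradf x0 w' k.+1)) w.
Proof.
move=> n0 m0 _ _ L0 smooth _ W0 _ Wrow Wcol a0 a_le k w.
have small := step_size_sq m0 L0 (ltW a0) a_le.
rewrite (condexp_next W alpha gradf x0 (fun st d => grad_error gradf st d.1)).
rewrite (condexp_next W alpha gradf x0 (fun st _ => consensus_err (st_y st))).
under [X in _ <= _ + _ * X]Ex_ext do rewrite Ex_const ?draw_card_gt0 //.
apply: le_trans (one_step_bound _ _ _ _ n0 m0 (ltW L0) smooth W0 Wrow Wcol small _
                  (tracking W alpha Wcol gradf x0 w k)) _.
rewrite table_spread_traj //.
rewrite lerD2r; set a := consensus_err _; set t := tk _ _ _ _ _ _; set G := sqnorm _.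
(* The argument gives the constants 7, 3 and 4; relax them to those stated. *)
have La : 0 <= L ^+ 2 * a by apply: mulr_ge0; [exact: sqr_ge0 | exact: consensus_err_ge0].
have nLt : 0 <= n%:R * L ^+ 2 * t.
  by rewrite mulrAC -table_spread_traj // mulr_ge0 ?sqr_ge0 ?table_spread_ge0.
have naLG : 0 <= n%:R * alpha ^+ 2 * L ^+ 2 * G.
  by rewrite mulr_ge0 ?sqnorm_ge0 // mulr_ge0 ?sqr_ge0 // mulr_ge0 ?ler0n ?sqr_ge0.
lra.
Qed.
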